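(* $\mathrm{Md}\cup\mathrm{Signs}$ is a finite complete axiomatisation of $\mathrm{Mod}_{\Sigma_{ms}}(\mathrm{Md}\cup\mathrm{Signs}\cup\mathrm{IL})$: for all $\Sigma_{ms}$-terms $r,s$, $\mathrm{Md}\cup\mathrm{Signs}\vdash r=s$ if and only if $r=s$ holds in every $\Sigma_{ms}$-structure satisfying $\mathrm{Md}$, $\mathrm{Signs}$ and $\mathrm{IL}$.
   Context: $\Sigma_{ms}=(0,1,+,\cdot,-,{}^{-1},\mathbf s)$ extends $\Sigma_m=(0,1,+,\cdot,-,{}^{-1})$ with a unary function $\mathbf s$. $\mathrm{Md}$ is the set of equations $(x+y)+z=x+(y+z)$, $x+y=y+x$, $x+0=x$, $x+(-x)=0$, $(x\cdot y)\cdot z=x\cdot(y\cdot z)$, $x\cdot y=y\cdot x$, $1\cdot x=x$, $x\cdot(y+z)=x\cdot y+x\cdot z$, $(x^{-1})^{-1}=x$, $x\cdot(x\cdot x^{-1})=x$. $1_t$ abbreviates $t\cdot t^{-1}$, $0_t$ abbreviates $1-1_t$, $t-u$ abbreviates $t+(-u)$. $\mathrm{Signs}$ is the set of equations: $\mathbf s(1_x)=1_x$; $\mathbf s(0_x)=0_x$; $\mathbf s(-1)=-1$; $\mathbf s(x^{-1})=\mathbf s(x)$; $\mathbf s(x\cdot y)=\mathbf s(x)\cdot\mathbf s(y)$; $0_{\mathbf s(x)-\mathbf s(y)}\cdot(\mathbf s(x+y)-\mathbf s(x))=0$. The inverse law $\mathrm{IL}$ is the conditional axiom $x\neq 0\rightarrow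 x\cdot x^{-1}=1$. $\vdash$ is derivability in equational logic. *)

From Stdlib Require Import List.
Import ListNotations.

Inductive term : Type :=
| Var  : nat -> term
| Zero : term
| One  : term
| Add  : term -> term -> term
| Mul  : term -> term -> term
| Neg  : term -> term
| Inv  : term -> term
| Sgn  : term -> term.

Fixpoint subst (sg : nat -> term) (t : term) : term :=
  match t with
  | Var n => sg n
  | Zero => Zero
  | One => One
  | Add a b => Add (subst sg a) (subst sg b)
  | Mul a b => Mul (subst sg a) (subst sg b)
  | Neg a => Neg (subst sg a)
  | Inv a => Inv (subst sg a)
  | Sgn a => Sgn (subst sg a)
  end.

Definition equation := (term * term)%type.

Inductive derivable (E : list equation) : term -> term -> Prop :=
| d_ax    : forall l r sg, In (l, r) E -> derivable E (subst sg l) (subst sg r)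
| d_refl  : forall t, derivable E t t
| d_sym   : forall t u, derivable E t u -> derivable E u t
| d_trans : forall t u v, derivable E t u -> derivable E u v -> derivable E t v
| d_add   : forall t t' u u', derivable E t t' -> derivable E u u' ->
              derivable E (Add t u) (Add t' u')
| d_mul   : forall t t' u u', derivable E t t' -> derivable E u u' ->
              derivable E (Mul t u) (Mul t' u')
| d_neg   : forall t t', derivable E t t' -> derivable E (Neg t) (Neg t')
| d_inv   : forall t t', derivable E t t' -> derivable E (Inv t) (Inv t')
| d_sgn   : forall t t', derivable E t t' -> derivable E (Sgn t) (Sgn t').

Record structure : Type := {
  carrier : Type;
  s_zero : carrier;
  s_one  : carrier;
  s_add  : carrier -> carrier -> carrier;
  s_mul  : carrier -> carrier -> carrier;
  s_neg  : carrier -> carrier;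
  s_inv  : carrier -> carrier;
  s_sgn  : carrier -> carrier
}.

Fixpoint eval (A : structure) (v : nat -> carrier A) (t : term) : carrier A :=
  match t with
  | Var n => v n
  | Zero => s_zero A
  | One => s_one A
  | Add a b => s_add A (eval A v a) (eval A v b)
  | Mul a b => s_mul A (eval A v a) (eval A v b)
  | Neg a => s_neg A (eval A v a)
  | Inv a => s_inv A (eval A v a)
  | Sgn a => s_sgn A (eval A v a)
  end.

Definition holds (A : structure) (t u : term) : Prop :=
  forall v : nat -> carrier A, eval A v t = eval A v u.

Definition satisfies (A : structure) (E : list equation) : Prop :=
  forall l r, In (l, r) E -> holds A l r.

Definition x : term := Var 0.
Definition y : term := Var 1.
Definition z : term := Var 2.
Definition one_ (t : term) : term := Mul t (Inv t).
Definition zero_ (t : term) : term := Add One (Neg (one_ t)).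
Definition Sub (t u : term) : term := Add t (Neg u).

Definition Md : list equation := [
  (Add (Add x y) z, Add x (Add y z));
  (Add x y, Add y x);
  (Add x Zero, x);
  (Add x (Neg x), Zero);
  (Mul (Mul x y) z, Mul x (Mul y z));
  (Mul x y, Mul y x);
  (Mul One x, x);
  (Mul x (Add y z), Add (Mul x y) (Mul x z));
  (Inv (Inv x), x);
  (Mul x (Mul x (Inv x)), x)
].

Definition Signs : list equation := [
  (Sgn (one_ x), one_ x);
  (Sgn (zero_ x), zero_ x);
  (Sgn (Neg One), Neg One);
  (Sgn (Inv x), Sgn x);
  (Sgn (Mul x y), Mul (Sgn x) (Sgn y));
  (Mul (zero_ (Sub (Sgn x) (Sgn y))) (Sub (Sgn (Add x y)) (Sgn x)), Zero)
].

Definition IL (A : structure) : Prop :=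
  forall a : carrier A, a <> s_zero A -> s_mul A a (s_inv A a) = s_one A.

(** For completeness,
    suppose r = s is not derivable.  The term model T (terms modulo
    derivability) satisfies Md ∪ Signs, is countable, and in it the element
    d = [r] - [s] is nonzero.  The idempotents of T behave like a Boolean
    algebra; enumerating the elements c_0, c_1, ... of T we build a
    decreasing chain of nonzero idempotents e_0 = 1_d, and e_(n+1) equal to
    e_n·1_(c_n) when this is nonzero, e_n·0_(c_n) otherwise (a maximal
    filter of idempotents).  Identifying a and b when a·e_n = b·e_n for some
    n is a congruence (for s because s(e) = e on idempotents); the quotient
    still satisfies every equation of T, it satisfies IL by maximality of
    the chain, and it separates [r] from [s] because d·e_n = 0 would force
    e_n = e_n·1_d = 0.  Since r = s holds in that quotient, this is absurd. *)

From Stdlib Require Import List Classical ClassicalEpsilon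
  FunctionalExtensionality PropExtensionality ProofIrrelevance Ring Cantor PeanoNat.

Lemma eval_subst (A : structure) (v : nat -> carrier A) (sg : nat -> term) (t : term) :
  eval A v (subst sg t) = eval A (fun n => eval A v (sg n)) t.
Proof. induction t; simpl; congruence. Qed.

Lemma soundness (E : list equation) (A : structure) (r s : term) :
  derivable E r s -> satisfies A E -> holds A r s.
Proof.
  intros Hd HA. induction Hd; intro w; simpl; try congruence.
  rewrite !eval_subst. apply HA. assumption.
Qed.

Lemma satisfies_app (A : structure) (E1 E2 : list equation) :
  satisfies A (E1 ++ E2) <-> satisfies A E1 /\ satisfies A E2.
Proof.
  split.
  - intros H. split; intros l r Hin; apply H, in_or_app; auto.
  - intros [H1 H2] l r Hin. apply in_app_or in Hin as [Hin | Hin]; auto.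
Qed.

Record congruence (A : structure) : Type := {
  cong :> carrier A -> carrier A -> Prop;
  cong_refl : forall a, cong a a;
  cong_sym : forall a b, cong a b -> cong b a;
  cong_trans : forall a b c, cong a b -> cong b c -> cong a c;
  cong_add : forall a a' b b', cong a a' -> cong b b' ->
    cong (s_add A a b) (s_add A a' b');
  cong_mul : forall a a' b b', cong a a' -> cong b b' ->
    cong (s_mul A a b) (s_mul A a' b');
  cong_neg : forall a a', cong a a' -> cong (s_neg A a) (s_neg A a');
  cong_inv : forall a a', cong a a' -> cong (s_inv A a) (s_inv A a');
  cong_sgn : forall a a', cong a a' -> cong (s_sgn A a) (s_sgn A a')
}.

Section Quotient.
Variable A : structure.
Variable C : congruence A.

Definition eqclass : Type := {P : carrier A -> Prop | exists a, P = C a}.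

Definition pi (a : carrier A) : eqclass := exist _ (C a) (ex_intro _ a eq_refl).

Definition rep (q : eqclass) : carrier A :=
  proj1_sig (constructive_indefinite_description _ (proj2_sig q)).

Lemma pi_rep (q : eqclass) : pi (rep q) = q.
Proof.
  destruct q as [P HP]. unfold rep, pi. simpl.
  destruct (constructive_indefinite_description _ HP) as [a Ha]. simpl.
  subst P. f_equal. apply proof_irrelevance.
Qed.

Lemma pi_eq (a b : carrier A) : pi a = pi b <-> C a b.
Proof.
  split.
  - intros H. apply (f_equal (@proj1_sig _ _)) in H. simpl in H.
    rewrite H. apply cong_refl.
  - intros H. unfold pi. apply eq_exist_uncurried.
    assert (HC : C a = C b).
    { extensionality c. apply propositional_extensionality.
      split; intros Hc; eapply cong_trans; eauto using cong_sym. }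
    exists HC. apply proof_irrelevance.
Qed.

Lemma rep_pi (a : carrier A) : C (rep (pi a)) a.
Proof. apply pi_eq. apply pi_rep. Qed.

Definition Quot : structure := {|
  carrier := eqclass;
  s_zero := pi (s_zero A);
  s_one := pi (s_one A);
  s_add := fun p q => pi (s_add A (rep p) (rep q));
  s_mul := fun p q => pi (s_mul A (rep p) (rep q));
  s_neg := fun p => pi (s_neg A (rep p));
  s_inv := fun p => pi (s_inv A (rep p));
  s_sgn := fun p => pi (s_sgn A (rep p)) |}.

Lemma eval_pi (v : nat -> carrier A) (t : term) :
  eval Quot (fun n => pi (v n)) t = pi (eval A v t).
Proof.
  induction t; simpl; try reflexivity;
    repeat match goal with H : _ = pi _ |- _ => rewrite H; clear H end;
    apply pi_eq;
    first [ apply cong_add | apply cong_mul | apply cong_neg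
          | apply cong_inv | apply cong_sgn ];
    apply rep_pi.
Qed.

Lemma quot_holds (l r : term) :
  (forall v, C (eval A v l) (eval A v r)) -> holds Quot l r.
Proof.
  intros H w.
  replace w with (fun n => pi (rep (w n))) by (extensionality n; apply pi_rep).
  rewrite !eval_pi. apply pi_eq, H.
Qed.

Lemma quot_satisfies (E : list equation) : satisfies A E -> satisfies Quot E.
Proof.
  intros HE l r Hin. apply quot_holds. intros v.
  rewrite (HE l r Hin v). apply cong_refl.
Qed.

Lemma quot_IL :
  (forall a, ~ C a (s_zero A) -> C (s_mul A a (s_inv A a)) (s_one A)) ->
  IL Quot.
Proof.
  intros H q Hq. rewrite <- (pi_rep q) in Hq |- *.
  transitivity (pi (s_mul A (rep q) (s_inv A (rep q)))).
  - exact (eval_pi (fun _ => rep q) (one_ (Var 0))).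
  - apply pi_eq, H. intros Hc. apply Hq, pi_eq, Hc.
Qed.

End Quotient.

Arguments pi {A C} a.
Arguments rep {A C} q.

Definition TS : structure := {|
  carrier := term; s_zero := Zero; s_one := One; s_add := Add; s_mul := Mul;
  s_neg := Neg; s_inv := Inv; s_sgn := Sgn |}.

Lemma eval_TS (v : nat -> term) (t : term) : eval TS v t = subst v t.
Proof. induction t; simpl; congruence. Qed.

Lemma subst_Var (t : term) : subst Var t = t.
Proof. induction t; simpl; congruence. Qed.

Definition provability (E : list equation) : congruence TS :=
  Build_congruence TS (derivable E) (d_refl E) (d_sym E) (d_trans E)
    (d_add E) (d_mul E) (d_neg E) (d_inv E) (d_sgn E).

Definition term_model (E : list equation) : structure := Quot TS (provability E).

Lemma term_model_satisfies (E : list equation) : satisfies (term_model E) E.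
Proof.
  intros l r Hin. apply quot_holds. intros v.
  simpl. rewrite !eval_TS. apply d_ax, Hin.
Qed.

Lemma term_model_generic (E : list equation) (t : term) :
  eval (term_model E) (fun n => @pi TS (provability E) (Var n)) t =
  @pi TS (provability E) t.
Proof. unfold term_model. rewrite eval_pi, eval_TS, subst_Var. reflexivity. Qed.

Fixpoint code (t : term) : nat :=
  match t with
  | Var n => Cantor.to_nat (0, n)
  | Zero => Cantor.to_nat (1, 0)
  | One => Cantor.to_nat (2, 0)
  | Add a b => Cantor.to_nat (3, Cantor.to_nat (code a, code b))
  | Mul a b => Cantor.to_nat (4, Cantor.to_nat (code a, code b))
  | Neg a => Cantor.to_nat (5, code a)
  | Inv a => Cantor.to_nat (6, code a)
  | Sgn a => Cantor.to_nat (7, code a)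
  end.

Lemma code_inj (t u : term) : code t = code u -> t = u.
Proof.
  revert u. induction t; intros [] H; cbn [code] in H;
    apply Cantor.to_nat_inj in H; try discriminate H; try reflexivity;
    apply (f_equal snd) in H; cbn [snd] in H;
    try (apply Cantor.to_nat_inj in H; injection H as H1 H2);
    f_equal; auto.
Qed.

Definition term_enum (n : nat) : term :=
  epsilon (inhabits Zero) (fun t => code t = n).

Lemma term_enum_code (t : term) : term_enum (code t) = t.
Proof.
  apply code_inj. unfold term_enum.
  apply (epsilon_spec (inhabits Zero) (fun u => code u = code t)). eauto.
Qed.

Lemma term_model_countable (E : list equation) :
  exists enum : nat -> carrier (term_model E), forall q, exists n, enum n = q.
Proof.
  exists (fun n => @pi TS (provability E) (term_enum n)). intros q.
  exists (code (rep q)). rewrite term_enum_code. apply pi_rep.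
Qed.

Lemma axiom_instance (A : structure) (E : list equation) (HA : satisfies A E)
    (i : nat) (l r : term) :
  nth_error E i = Some (l, r) -> forall v, eval A v l = eval A v r.
Proof. intros Hi v. apply HA. eapply nth_error_In. exact Hi. Qed.

Definition val3 {A : structure} (a b c : carrier A) : nat -> carrier A :=
  fun n => match n with 0 => a | 1 => b | _ => c end.

Section Meadow.
Variable A : structure.
Hypothesis HM : satisfies A Md.
Hypothesis HS : satisfies A Signs.

Declare Scope meadow_scope.
Local Notation "a + b" := (s_add A a b) : meadow_scope.
Local Notation "a * b" := (s_mul A a b) : meadow_scope.
Local Notation "- a" := (s_neg A a) : meadow_scope.
Local Notation "a - b" := (s_add A a (s_neg A b)) : meadow_scope.
Local Notation "a ⁻¹" := (s_inv A a) (at level 2) : meadow_scope.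
Local Notation "0" := (s_zero A) : meadow_scope.
Local Notation "1" := (s_one A) : meadow_scope.
Local Notation sg := (s_sgn A).
Local Open Scope meadow_scope.

Lemma addA a b c : (a + b) + c = a + (b + c).
Proof. exact (axiom_instance A Md HM 0%nat _ _ eq_refl (val3 a b c)). Qed.
Lemma addC a b : a + b = b + a.
Proof. exact (axiom_instance A Md HM 1%nat _ _ eq_refl (val3 a b a)). Qed.
Lemma add0 a : a + 0 = a.
Proof. exact (axiom_instance A Md HM 2%nat _ _ eq_refl (val3 a a a)). Qed.
Lemma addN a : a + - a = 0.
Proof. exact (axiom_instance A Md HM 3%nat _ _ eq_refl (val3 a a a)). Qed.
Lemma mulA a b c : (a * b) * c = a * (b * c).
Proof. exact (axiom_instance A Md HM 4%nat _ _ eq_refl (val3 a b c)). Qed.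
Lemma mulC a b : a * b = b * a.
Proof. exact (axiom_instance A Md HM 5%nat _ _ eq_refl (val3 a b a)). Qed.
Lemma mul1 a : 1 * a = a.
Proof. exact (axiom_instance A Md HM 6%nat _ _ eq_refl (val3 a a a)). Qed.
Lemma mulD a b c : a * (b + c) = a * b + a * c.
Proof. exact (axiom_instance A Md HM 7%nat _ _ eq_refl (val3 a b c)). Qed.
Lemma invK a : (a⁻¹)⁻¹ = a.
Proof. exact (axiom_instance A Md HM 8%nat _ _ eq_refl (val3 a a a)). Qed.
Lemma mul_pinv a : a * (a * a⁻¹) = a.
Proof. exact (axiom_instance A Md HM 9%nat _ _ eq_refl (val3 a a a)). Qed.
Lemma sg_one a : sg (a * a⁻¹) = a * a⁻¹.
Proof. exact (axiom_instance A Signs HS 0%nat _ _ eq_refl (val3 a a a)). Qed.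
Lemma sg_mul a b : sg (a * b) = sg a * sg b.
Proof. exact (axiom_instance A Signs HS 4%nat _ _ eq_refl (val3 a b a)). Qed.

Lemma meadow_ring :
  ring_theory 0 1 (s_add A) (s_mul A) (fun a b => a - b) (s_neg A) eq.
Proof.
  constructor; intros.
  - rewrite addC. apply add0.
  - apply addC.
  - symmetry. apply addA.
  - apply mul1.
  - apply mulC.
  - symmetry. apply mulA.
  - rewrite mulC, mulD, !(mulC z). reflexivity.
  - reflexivity.
  - apply addN.
Qed.
Add Ring meadow : meadow_ring.

Lemma pinv_unique a b c : a * (a * b) = a -> b * (b * a) = b ->
  a * (a * c) = a -> c * (c * a) = c -> b = c.
Proof.
  intros Hab Hba Hac Hca.
  assert (Hbc : b * a = a * c).
  { transitivity (b * (a * (a * c))); [rewrite Hac; reflexivity |].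
    transitivity ((a * (a * b)) * c); [ring |]. rewrite Hab. reflexivity. }
  rewrite <- Hba, <- Hca, Hbc.
  transitivity ((b * a) * c); [ring |]. rewrite Hbc. ring.
Qed.

Lemma inv_pinv a : a⁻¹ * (a⁻¹ * a) = a⁻¹.
Proof. rewrite <- (invK a) at 3. apply mul_pinv. Qed.

Lemma inv_mul a b : (a * b)⁻¹ = a⁻¹ * b⁻¹.
Proof.
  apply (pinv_unique (a * b)).
  - apply mul_pinv.
  - apply inv_pinv.
  - transitivity ((a * (a * a⁻¹)) * (b * (b * b⁻¹))); [ring |].
    rewrite !mul_pinv. reflexivity.
  - transitivity ((a⁻¹ * (a⁻¹ * a)) * (b⁻¹ * (b⁻¹ * b))); [ring |].
    rewrite !inv_pinv. reflexivity.
Qed.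

Lemma inv_idem e : e * e = e -> e⁻¹ = e.
Proof.
  intros He. apply (pinv_unique e); try apply mul_pinv; try apply inv_pinv;
    rewrite !He; reflexivity.
Qed.

Lemma sg_idem e : e * e = e -> sg e = e.
Proof.
  intros He. assert (H1e : e * e⁻¹ = e) by (rewrite inv_idem; auto).
  rewrite <- H1e at 1. rewrite sg_one. exact H1e.
Qed.

Lemma one_idem a : (a * a⁻¹) * (a * a⁻¹) = a * a⁻¹.
Proof. transitivity ((a * (a * a⁻¹)) * a⁻¹); [ring |]. rewrite mul_pinv. reflexivity. Qed.

Lemma sub_eq0 a b : a - b = 0 -> a = b.
Proof. intros H. transitivity ((a - b) + b); [ring |]. rewrite H. ring. Qed.

Lemma cong_sub (C : congruence A) a b : C a b -> C (a - b) 0.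
Proof.
  intros H. rewrite <- (addN b).
  apply cong_add; [exact H | apply cong_refl].
Qed.

Section Chain.
Variable enum : nat -> carrier A.
Hypothesis enum_surj : forall a, exists n, enum n = a.
Variable d : carrier A.
Hypothesis d_nonzero : d <> 0.

Fixpoint chain (n : nat) : carrier A :=
  match n with
  | O => d * d⁻¹
  | S n =>
      let e := chain n in let c := enum n in
      if excluded_middle_informative (e * (c * c⁻¹) = 0)
      then e * (1 - c * c⁻¹) else e * (c * c⁻¹)
  end.

Lemma chain_idem n : chain n * chain n = chain n.
Proof.
  induction n as [| n IH]; simpl; [apply one_idem |].
  set (e := chain n) in *. set (f := enum n * (enum n)⁻¹).
  assert (Hf : f * f = f) by apply one_idem.
  destruct excluded_middle_informative.
  - transitivity ((e * e) * (1 - f - f + f * f)); [ring |].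
    rewrite IH, Hf. ring.
  - transitivity ((e * e) * (f * f)); [ring |]. rewrite IH, Hf. reflexivity.
Qed.

Lemma chain_nonzero n : chain n <> 0.
Proof.
  induction n as [| n IH]; simpl.
  - intros H. apply d_nonzero. rewrite <- (mul_pinv d), H. ring.
  - destruct excluded_middle_informative as [Hz | Hnz]; [| exact Hnz].
    intros H. apply IH.
    transitivity (chain n * (1 - enum n * (enum n)⁻¹)
                  + chain n * (enum n * (enum n)⁻¹)); [ring |].
    rewrite H, Hz. ring.
Qed.

Lemma chain_below n m : n <= m -> chain m * chain n = chain m.
Proof.
  induction 1 as [| m _ IH]; [apply chain_idem |].
  assert (Hstep : exists f, chain (S m) = chain m * f).
  { simpl. destruct excluded_middle_informative; eexists; reflexivity. }
  destruct Hstep as [f ->].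
  transitivity ((chain m * chain n) * f); [ring |]. rewrite IH. reflexivity.
Qed.

Definition chain_equiv a b : Prop := exists n, a * chain n = b * chain n.

Lemma agree_below a b n m :
  a * chain n = b * chain n -> n <= m -> a * chain m = b * chain m.
Proof.
  intros H Hnm. rewrite <- (chain_below n m Hnm).
  transitivity ((a * chain n) * chain m); [ring |]. rewrite H. ring.
Qed.

Lemma agree_common a a' b b' :
  chain_equiv a a' -> chain_equiv b b' ->
  exists n, a * chain n = a' * chain n /\ b * chain n = b' * chain n.
Proof.
  intros [n Ha] [m Hb]. exists (Nat.max n m). split.
  - exact (agree_below _ _ _ _ Ha (Nat.le_max_l n m)).
  - exact (agree_below _ _ _ _ Hb (Nat.le_max_r n m)).
Qed.

Definition chain_congruence : congruence A.
Proof.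
  refine (Build_congruence A chain_equiv _ _ _ _ _ _ _ _).
  - intros a. exists O. reflexivity.
  - intros a b [n H]. exists n. auto.
  - intros a b c Hab Hbc. destruct (agree_common _ _ _ _ Hab Hbc) as [n [H1 H2]].
    exists n. congruence.
  - intros a a' b b' Ha Hb. destruct (agree_common _ _ _ _ Ha Hb) as [n [H1 H2]].
    exists n. rewrite (mulC (a + b)), (mulC (a' + b')), !mulD, !(mulC (chain n)).
    congruence.
  - intros a a' b b' Ha Hb. destruct (agree_common _ _ _ _ Ha Hb) as [n [H1 H2]].
    exists n. pose proof (chain_idem n) as He.
    rewrite <- He at 1 2.
    transitivity ((a * chain n) * (b * chain n)); [ring |].
    rewrite H1, H2. ring.
  - intros a a' [n H]. exists n.
    transitivity (- (a * chain n)); [ring |]. rewrite H. ring.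
  - intros a a' [n H]. exists n.
    rewrite <- (inv_idem _ (chain_idem n)), <- !inv_mul, H. reflexivity.
  - intros a a' [n H]. exists n.
    rewrite <- (sg_idem _ (chain_idem n)), <- !sg_mul, H. reflexivity.
Defined.

Lemma chain_inverse_law a :
  ~ chain_equiv a 0 -> chain_equiv (a * a⁻¹) 1.
Proof.
  intros Ha. destruct (enum_surj a) as [n <-].
  exists (S n). simpl. destruct excluded_middle_informative as [Hz | Hnz].
  - exfalso. apply Ha. exists (S n). simpl.
    destruct excluded_middle_informative as [_ | Hnz]; [| contradiction].
    transitivity (chain n * (enum n - enum n * (enum n * (enum n)⁻¹))); [ring |].
    rewrite mul_pinv. ring.
  - transitivity (chain n * ((enum n * (enum n)⁻¹) * (enum n * (enum n)⁻¹))); [ring |].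
    rewrite one_idem. ring.
Qed.

Lemma chain_separates : ~ chain_equiv d 0.
Proof.
  intros [n H]. apply (chain_nonzero n).
  rewrite <- (chain_below 0 n (Nat.le_0_l n)). simpl.
  transitivity ((d * chain n) * d⁻¹); [ring |]. rewrite H. ring.
Qed.

End Chain.

Theorem countable_IL_quotient (enum : nat -> carrier A) :
  (forall a, exists n, enum n = a) ->
  forall d, d <> 0 -> exists C : congruence A, IL (Quot A C) /\ ~ C d 0.
Proof.
  intros Hsurj d Hd. exists (chain_congruence enum d). split.
  - apply quot_IL, (chain_inverse_law enum Hsurj).
  - apply chain_separates, Hd.
Qed.

End Meadow.

Theorem corollary2 : forall r s : term,
  derivable (Md ++ Signs) r s <->
  (forall A : structure, satisfies A Md -> satisfies A Signs -> IL A -> holds A r s).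
Proof.
  intros r s. split.
  - intros Hd A HM HS _. apply (soundness _ _ _ _ Hd), satisfies_app. auto.
  - intros Hvalid. apply NNPP. intros Hnd.
    set (P := provability (Md ++ Signs)).
    set (T := term_model (Md ++ Signs)).
    destruct (proj1 (satisfies_app T Md Signs) (term_model_satisfies _)) as [HTM HTS].
    set (d := s_add T (@pi _ P r) (s_neg T (@pi _ P s))).
    assert (Hd : d <> s_zero T).
    { intros H. apply Hnd, (pi_eq TS P), (sub_eq0 T HTM), H. }
    destruct (term_model_countable (Md ++ Signs)) as [enum Henum].
    destruct (countable_IL_quotient T HTM HTS enum Henum d Hd) as [C [HIL Hsep]].
    pose proof (Hvalid (Quot T C) (quot_satisfies T C _ HTM)
                  (quot_satisfies T C _ HTS) HIL (fun n => @pi T C (@pi TS P (Var n)))) as Hrs.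
    rewrite !(eval_pi T C) in Hrs. unfold T in Hrs.
    rewrite !term_model_generic in Hrs.
    apply Hsep, (cong_sub T HTM), (pi_eq T C), Hrs.
Qed.
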